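(* Let $A,B,C,D\in\mathcal{B}(\mathcal{H})$. Then for all $r\geq1$, $$w^{r}\left(\begin{bmatrix}A&B\\C&D\end{bmatrix}\right)\leq 4^{r-1}\,w\left(\begin{bmatrix}w^r(A)&\|B\|^r\\ \|C\|^r&w^r(D)\end{bmatrix}\right),$$ where on the right $w$ is the numerical radius of a $2\times2$ complex matrix acting on $\mathbb{C}^2$.
   Context: $\mathcal{H}$ is a complex Hilbert space, $\mathcal{B}(\mathcal{H})$ the bounded linear operators on it, and $w(T)=\sup\{|\langle Tz,z\rangle|:\|z\|=1\}$ the numerical radius (on any Hilbert space). The operator matrix $\begin{bmatrix}A&B\\C&D\end{bmatrix}$ acts on $\mathcal{H}\oplus\mathcal{H}$ by $(x,y)\mapsto(Ax+By,Cx+Dy)$. *)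

From HB Require Import structures.
From mathcomp Require Import all_boot all_order all_algebra.
From mathcomp Require Import complex.
From mathcomp Require Import classical_sets reals exp.
Set Implicit Arguments. Unset Strict Implicit. Unset Printing Implicit Defensive.
Import Order.TTheory GRing.Theory Num.Theory ComplexField.
Local Open Scope ring_scope.
Local Open Scope classical_set_scope.

Section Defs.
Variable R : realType.

Definition ipnorm (T : Type) (ip : T -> T -> R[i]) (z : T) : R :=
  Num.sqrt (complex.Re (ip z z)).

Definition is_hilbert (V : lmodType R[i]) (ip : V -> V -> R[i]) : Prop :=
  [/\ (forall a x y z, ip (a *: x + y) z = a * ip x z + ip y z),
      (forall x y, ip y x = conjc (ip x y)),
      (forall x, 0 <= complex.Re (ip x x)),
      (forall x, ip x x = 0 -> x = 0) &
      (forall u : nat -> V,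
         (forall e : R, 0 < e -> exists N : nat, forall m n : nat,
             (N <= m)%N -> (N <= n)%N -> ipnorm ip (u m - u n) < e) ->
         exists x : V, forall e : R, 0 < e -> exists N : nat, forall n : nat,
             (N <= n)%N -> ipnorm ip (u n - x) < e)].

Definition bounded_op (V : lmodType R[i]) (ip : V -> V -> R[i]) (T : V -> V) : Prop :=
  (forall a x y, T (a *: x + y) = a *: T x + T y) /\
  exists M : R, forall x, ipnorm ip (T x) <= M * ipnorm ip x.

Definition numrad (X : Type) (ip : X -> X -> R[i]) (T : X -> X) : R :=
  sup [set r : R | exists z : X, ipnorm ip z = 1 /\ r = ComplexField.Normc.normc (ip (T z) z)].

Definition opnorm (X : Type) (ip : X -> X -> R[i]) (T : X -> X) : R :=
  sup [set r : R | exists z : X, ipnorm ip z <= 1 /\ r = ipnorm ip (T z)].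

Definition ip_sum (X : Type) (ip : X -> X -> R[i]) (p q : X * X) : R[i] :=
  ip p.1 q.1 + ip p.2 q.2.

Definition opmat (V : lmodType R[i]) (A B C D : V -> V) (p : V * V) : V * V :=
  (A p.1 + B p.2, C p.1 + D p.2).

Definition ipC2 (u v : 'cV[R[i]]_2) : R[i] :=
  \sum_(k < 2) u k ord0 * conjc (v k ord0).

Definition mx2 (a b c d : R[i]) : 'M[R[i]]_2 :=
  \matrix_(i < 2, j < 2)
    (if i == ord0 then (if j == ord0 then a else b)
                  else (if j == ord0 then c else d)).

Definition numrad_mx2 (M : 'M[R[i]]_2) : R := numrad ipC2 (fun z => M *m z).

End Defs.

From HB Require Import structures.
From mathcomp Require Import all_boot all_order all_algebra.
From mathcomp Require Import complex.
From mathcomp Require Import classical_sets reals exp.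
From mathcomp Require Import ring lra boolp.
From mathcomp Require Import interval_inference hoelder.
Import Order.TTheory GRing.Theory Num.Theory ComplexField.
Local Open Scope ring_scope.
Local Open Scope complex_scope.
Local Open Scope classical_set_scope.

(* Let M be the operator matrix, z = (x, y) a unit vector of H (+) H,
   t = ||x|| and s = ||y||, so that t^2 + s^2 = 1.  Splitting <Mz, z> along
   the four blocks gives
     |<Mz, z>| <= w(A) t^2 + ||B|| ts + ||C|| ts + w(D) s^2.
   Convexity of u |-> u^r bounds the r-th power of this sum of four terms by
   4^(r-1) times the sum of their r-th powers, and since t^2, ts and s^2 lie in
   [0, 1] the latter is at most w(A)^r t^2 + ||B||^r ts + ||C||^r ts + w(D)^r s^2,
   which is <Nv, v> for the real unit vector v = (t, s) of C^2 and the 2x2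
   matrix N of the right-hand side, hence at most w(N). *)

Section PowR.
Context {R : realType}.
Implicit Types r x y : R.

Lemma powR_midpoint_le r x y : 1 <= r -> 0 <= x -> 0 <= y ->
  (2^-1 * x + 2^-1 * y) `^ r <= 2^-1 * x `^ r + 2^-1 * y `^ r.
Proof.
move=> r1 x0 y0.
rewrite {2 4}(_ : 2^-1 = 1 - 2^-1 :> R); last by rewrite {2}(splitr 1) div1r addrK.
by apply: (convex_powR r1 (Itv01 _ _)) => //=;
  rewrite ?inE/= ?in_itv/= ?andbT // ?invr_ge0// invf_le1 ?ler1n.
Qed.

Lemma powRD2_le r x y : 1 <= r -> 0 <= x -> 0 <= y ->
  (x + y) `^ r <= 2 `^ (r - 1) * (x `^ r + y `^ r).
Proof.
move=> r1 x0 y0.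
have -> : x + y = 2 * (2^-1 * x + 2^-1 * y) by field.
rewrite powRM // ?addr_ge0 ?mulr_ge0 ?invr_ge0 //.
rewrite powRB ?powRr1 //; last by apply/implyP => _; rewrite pnatr_eq0.
rewrite -mulrA ler_wpM2l ?powR_ge0 //.
have := powR_midpoint_le _ _ _ r1 x0 y0; lra.
Qed.

Lemma powRD4_le r (p q u v : R) : 1 <= r ->
  0 <= p -> 0 <= q -> 0 <= u -> 0 <= v ->
  (p + q + u + v) `^ r <= 4 `^ (r - 1) * (p `^ r + q `^ r + u `^ r + v `^ r).
Proof.
move=> r1 p0 q0 u0 v0.
rewrite -addrA.
apply: le_trans (powRD2_le _ _ _ r1 (addr_ge0 p0 q0) (addr_ge0 u0 v0)) _.
have -> : 4 = 2 * 2 :> R by rewrite -natrM.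
rewrite powRM // -mulrA ler_wpM2l ?powR_ge0 //.
have := powRD2_le _ _ _ r1 p0 q0; have := powRD2_le _ _ _ r1 u0 v0.
have := powR_ge0 2 (r - 1); nra.
Qed.

Lemma powRM_le1 r (a x : R) : 1 <= r -> 0 <= a -> 0 <= x <= 1 ->
  (a * x) `^ r <= a `^ r * x.
Proof.
move=> r1 a0 /andP[x0 x1]; have [->|xn0] := eqVneq x 0.
  by rewrite mulr0 mulr0 powR0 // gt_eqF // (lt_le_trans ltr01 r1).
by rewrite mulrC [_ * x]mulrC ge1r_powRZ // lt_neqAle eq_sym xn0 x0.
Qed.

Lemma powR_le_root r x (K : R) : 0 < r -> 0 <= x -> 0 <= K ->
  (x `^ r <= K) = (x <= K `^ r^-1).
Proof.
move=> r0 x0 K0; have r0' := ltW r0; apply/idP/idP => xK.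
  rewrite -[x](powRr1 x0) -(mulfV (lt0r_neq0 r0)) powRrM.
  by apply: (ge0_ler_powR _ _ _ xK); rewrite ?invr_ge0 ?nnegrE ?powR_ge0.
rewrite -[K](powRr1 K0) -(mulVf (lt0r_neq0 r0)) powRrM.
by apply: (ge0_ler_powR _ _ _ xK); rewrite ?nnegrE ?powR_ge0.
Qed.

End PowR.

Section Sup.
Context {R : realType}.
Implicit Types (S : set R) (b : R).

(* [sup set0 = 0], whence the hypothesis [0 <= b]. *)
Lemma sup_le_ge0 S b : ubound S b -> 0 <= b -> sup S <= b.
Proof.
move=> Sb b0; have [|S0] := pselect (S !=set0); first by move/ge_sup; apply.
by rewrite (_ : S = set0) ?sup0 //; apply/seteqP; split=> // x Sx; apply: S0; exists x.
Qed.

Lemma sup_ge0 S b : ubound S b -> (forall y, S y -> 0 <= y) -> 0 <= sup S.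
Proof.
move=> Sb S_ge0; have [[x Sx]|S0] := pselect (S !=set0).
  have Sub : has_ubound S by exists b.
  exact: le_trans (S_ge0 _ Sx) (ub_le_sup Sub Sx).
by rewrite (_ : S = set0) ?sup0 //; apply/seteqP; split=> // x Sx; apply: S0; exists x.
Qed.

End Sup.

Lemma normc_ge0 {R : rcfType} (c : R[i]) : 0 <= Normc.normc c.
Proof. by case: c => a b; exact: sqrtr_ge0. Qed.

Lemma normc_real {R : rcfType} (c : R) : Normc.normc c%:C = `|c|.
Proof. by rewrite /= expr0n addr0 sqrtr_sqr. Qed.

Lemma normc_conj {R : rcfType} (c : R[i]) : Normc.normc c^* = Normc.normc c.
Proof. by case: c => a b /=; rewrite sqrrN. Qed.

Lemma normc_mul_conj {R : rcfType} (c : R[i]) :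
  complex.Re (c * c^*) = Normc.normc c ^+ 2.
Proof. by case: c => a b /=; rewrite sqr_sqrtr ?addr_ge0 ?sqr_ge0 //; ring. Qed.

Lemma sqrD_eq1_le1 {R : realDomainType} (x y : R) :
  0 <= x -> x ^+ 2 + y ^+ 2 = 1 -> x <= 1.
Proof. by move=> x0 h; have := sqr_ge0 y; nra. Qed.

Section NumericalRadius.
Context {R : realType} {X : Type} {ip : X -> X -> R[i]} {T : X -> X} {k : R}.
Hypothesis numrad_bound :
  forall z, ipnorm ip z = 1 -> Normc.normc (ip (T z) z) <= k.

Let numrad_ubound :
  ubound [set r | exists z, ipnorm ip z = 1 /\ r = Normc.normc (ip (T z) z)] k.
Proof. by move=> _ [z [z1 ->]]; exact: numrad_bound. Qed.

Lemma numrad_ge0 : 0 <= numrad ip T.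
Proof. by apply: sup_ge0 numrad_ubound _ => _ [z [_ ->]]; exact: normc_ge0. Qed.

Lemma le_numrad z : ipnorm ip z = 1 -> Normc.normc (ip (T z) z) <= numrad ip T.
Proof. by move=> z1; apply: ub_le_sup; [exists k | exists z]. Qed.

Lemma numrad_le : 0 <= k -> numrad ip T <= k.
Proof. exact: sup_le_ge0. Qed.

End NumericalRadius.

Lemma numrad_powR_le (R : realType) (X : Type) (ip : X -> X -> R[i]) (T : X -> X)
    (r K : R) : 0 < r -> 0 <= K ->
  (forall z, ipnorm ip z = 1 -> Normc.normc (ip (T z) z) `^ r <= K) ->
  numrad ip T `^ r <= K.
Proof.
move=> r0 K0 hK.
have root_bound z : ipnorm ip z = 1 -> Normc.normc (ip (T z) z) <= K `^ r^-1.
  by move=> /hK; rewrite powR_le_root ?normc_ge0.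
by rewrite powR_le_root ?(numrad_ge0 root_bound) ?(numrad_le root_bound) ?powR_ge0.
Qed.

Section OperatorNorm.
Context {R : realType} {X : Type} {ip : X -> X -> R[i]} {T : X -> X} {k : R}.
Hypothesis opnorm_bound : forall z, ipnorm ip z <= 1 -> ipnorm ip (T z) <= k.

Let opnorm_ubound :
  ubound [set r | exists z, ipnorm ip z <= 1 /\ r = ipnorm ip (T z)] k.
Proof. by move=> _ [z [z1 ->]]; exact: opnorm_bound. Qed.

Lemma opnorm_ge0 : 0 <= opnorm ip T.
Proof. by apply: sup_ge0 opnorm_ubound _ => _ [z [_ ->]]; exact: sqrtr_ge0. Qed.

Lemma le_opnorm z : ipnorm ip z <= 1 -> ipnorm ip (T z) <= opnorm ip T.
Proof. by move=> z1; apply: ub_le_sup; [exists k | exists z]. Qed.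

End OperatorNorm.

Section Matrix2.
Context {R : realType}.
Implicit Types (a b c d : R[i]) (u v : 'cV[R[i]]_2).

Let lift0_ord_max : lift ord0 ord0 = ord_max :> 'I_2.
Proof. exact: val_inj. Qed.

Lemma ipC2E u v : ipC2 u v =
  u ord0 ord0 * (v ord0 ord0)^* + u ord_max ord0 * (v ord_max ord0)^*.
Proof. by rewrite /ipC2 big_ord_recl big_ord1 lift0_ord_max. Qed.

Lemma mx2_mulE a b c d v :
  (mx2 a b c d *m v) ord0 ord0 = a * v ord0 ord0 + b * v ord_max ord0 /\
  (mx2 a b c d *m v) ord_max ord0 = c * v ord0 ord0 + d * v ord_max ord0.
Proof. by split; rewrite !mxE big_ord_recl big_ord1 !mxE /= lift0_ord_max. Qed.

Lemma ipnormC2_sqr v : ipnorm (@ipC2 R) v ^+ 2 =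
  Normc.normc (v ord0 ord0) ^+ 2 + Normc.normc (v ord_max ord0) ^+ 2.
Proof.
by rewrite /ipnorm ipC2E raddfD /= !normc_mul_conj sqr_sqrtr ?addr_ge0 ?sqr_ge0.
Qed.

Lemma ipC2_mx2_le a b c d v : ipnorm (@ipC2 R) v = 1 ->
  Normc.normc (ipC2 (mx2 a b c d *m v) v) <=
  Normc.normc a + Normc.normc b + Normc.normc c + Normc.normc d.
Proof.
move=> v1; have := ipnormC2_sqr v; rewrite v1 expr1n ipC2E.
have [-> ->] := mx2_mulE a b c d v.
set v0 := v ord0 ord0; set v1' := v ord_max ord0 => vsum.
have n0 : Normc.normc v0 <= 1 by apply: sqrD_eq1_le1 (normc_ge0 _) (esym vsum).
have n1 : Normc.normc v1' <= 1.
  by apply: (@sqrD_eq1_le1 _ _ (Normc.normc v0)) (normc_ge0 _) _; rewrite addrC -vsum.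
apply: le_trans (le_normcD _ _) _; rewrite !Normc.normcM !normc_conj.
have := le_normcD (a * v0) (b * v1'); have := le_normcD (c * v0) (d * v1').
rewrite !Normc.normcM.
have := normc_ge0 a; have := normc_ge0 b; have := normc_ge0 c; have := normc_ge0 d.
have := normc_ge0 v0; have := normc_ge0 v1'.
have := normc_ge0 (a * v0 + b * v1'); have := normc_ge0 (c * v0 + d * v1').
nra.
Qed.

Lemma numrad_mx2_ge0 a b c d : 0 <= numrad_mx2 (mx2 a b c d).
Proof. exact/numrad_ge0/ipC2_mx2_le. Qed.

Lemma le_numrad_mx2 (a b c d t s : R) : 0 <= t -> 0 <= s -> t ^+ 2 + s ^+ 2 = 1 ->
  `|a * t ^+ 2 + b * (t * s) + c * (t * s) + d * s ^+ 2|
    <= numrad_mx2 (mx2 a%:C b%:C c%:C d%:C).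
Proof.
move=> t0 s0 ts.
pose v : 'cV[R[i]]_2 := \col_i (if i == ord0 then t%:C else s%:C).
have v1 : ipnorm (@ipC2 R) v = 1.
  apply/eqP; rewrite -sqrp_eq1 ?sqrtr_ge0 //; apply/eqP.
  by rewrite ipnormC2_sqr !mxE /= !sqr_sqrtr ?addr_ge0 ?sqr_ge0 // expr0n !addr0.
have := le_numrad (@ipC2_mx2_le a%:C b%:C c%:C d%:C) _ v1; rewrite ipC2E.
have [-> ->] := mx2_mulE a%:C b%:C c%:C d%:C v; rewrite !mxE /=.
rewrite !(oppr0, mulr0, mul0r, subr0, addr0, add0r) expr0n addr0 sqrtr_sqr.
congr (Num.norm _ <= _); ring.
Qed.

Lemma powR_quadratic_le (r a b c d t s : R) : 1 <= r ->
  0 <= a -> 0 <= b -> 0 <= c -> 0 <= d ->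
  0 <= t -> 0 <= s -> t ^+ 2 + s ^+ 2 = 1 ->
  (a * t ^+ 2 + b * (t * s) + c * (t * s) + d * s ^+ 2) `^ r <=
  4 `^ (r - 1) *
  numrad_mx2 (mx2 (a `^ r)%:C (b `^ r)%:C (c `^ r)%:C (d `^ r)%:C).
Proof.
move=> r1 a0 b0 c0 d0 t0 s0 ts.
have t1 : t <= 1 by apply: sqrD_eq1_le1 t0 ts.
have s1 : s <= 1 by apply: (@sqrD_eq1_le1 _ _ t) s0 _; rewrite addrC.
have t2 : 0 <= t ^+ 2 <= 1 by rewrite sqr_ge0 expr_le1.
have s2 : 0 <= s ^+ 2 <= 1 by rewrite sqr_ge0 expr_le1.
have ts1 : 0 <= t * s <= 1 by rewrite mulr_ge0 // mulr_ile1.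
apply: le_trans (powRD4_le _ _ _ _ _ r1 _ _ _ _) _;
  rewrite ?mulr_ge0 ?sqr_ge0 //.
rewrite ler_wpM2l ?powR_ge0 //.
apply: le_trans (le_trans (ler_norm _) (le_numrad_mx2 _ _ _ _ _ _ t0 s0 ts)).
by do !apply: lerD; apply: powRM_le1.
Qed.

End Matrix2.

Section Hilbert.
Context {R : realType} {V : lmodType R[i]} {ip : V -> V -> R[i]}.
Hypothesis Hip : is_hilbert ip.
Local Notation nm := (ipnorm ip).

Lemma ip_linear a x y z : ip (a *: x + y) z = a * ip x z + ip y z.
Proof. by case: Hip. Qed.

Lemma ipC x y : ip y x = (ip x y)^*.
Proof. by case: Hip. Qed.

Lemma ip_Re_ge0 x : 0 <= complex.Re (ip x x).
Proof. by case: Hip. Qed.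

Lemma ip_eq0 x : ip x x = 0 -> x = 0.
Proof. by case: Hip => _ _ _ h _; exact: h. Qed.

Lemma ip0l z : ip 0 z = 0.
Proof.
have /eqP := ip_linear 1 0 0 z.
by rewrite scale1r addr0 mul1r addrC -subr_eq subrr eq_sym => /eqP.
Qed.

Lemma ipDl x y z : ip (x + y) z = ip x z + ip y z.
Proof. by rewrite -{1}[x]scale1r ip_linear mul1r. Qed.

Lemma ipZl a x z : ip (a *: x) z = a * ip x z.
Proof. by rewrite -[a *: x]addr0 ip_linear ip0l addr0. Qed.

Lemma ip0r z : ip z 0 = 0.
Proof. by rewrite ipC ip0l conjc0. Qed.

Lemma ipDr x y z : ip z (x + y) = ip z x + ip z y.
Proof. by rewrite ipC ipDl rmorphD /= -!ipC. Qed.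

Lemma ipZr a x z : ip z (a *: x) = a^* * ip z x.
Proof. by rewrite ipC ipZl rmorphM /= -ipC. Qed.

Lemma ipnn x : ip x x = (nm x ^+ 2)%:C.
Proof.
have : complex.Im (ip x x) = 0.
  have := ipC x x; case: (ip x x) => a b /= [] /eqP.
  by rewrite -subr_eq0 opprK -mulr2n mulrn_eq0 /= => /eqP.
rewrite /ipnorm sqr_sqrtr ?ip_Re_ge0 //.
by case: (ip x x) => a b /= ->.
Qed.

Lemma ipnorm_ge0 x : 0 <= nm x.
Proof. exact: sqrtr_ge0. Qed.

Lemma ipnorm0 : nm 0 = 0.
Proof. by rewrite /ipnorm ip0l /= sqrtr0. Qed.

Lemma ipnorm_gt0 x : (0 < nm x) = (x != 0).
Proof.
rewrite lt_neqAle ipnorm_ge0 andbT eq_sym; apply/idP/idP; apply: contra.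
  by move=> /eqP ->; rewrite ipnorm0.
by move=> /eqP nx0; apply/eqP/ip_eq0; rewrite ipnn nx0 expr0n.
Qed.

Lemma ipnormZ a x : nm (a *: x) = Normc.normc a * nm x.
Proof.
rewrite /ipnorm ipZl ipZr mulrA ipnn -/(nm x); case: a => a1 a2 /=.
by rewrite -sqrtrM ?addr_ge0 ?sqr_ge0 //; congr Num.sqrt; ring.
Qed.

Lemma cauchy_schwarz x y : Normc.normc (ip x y) <= nm x * nm y.
Proof.
have [->|y0] := eqVneq y 0; first by rewrite ip0r Normc.normc0 ipnorm0 mulr0.
have := ip_Re_ge0 ((nm y ^+ 2)%:C *: x + (- ip x y) *: y).
rewrite !ipDl !ipDr !ipZl !ipZr (ipC x y) !ipnn.
have S0 : 0 < nm y ^+ 2 by rewrite exprn_gt0 // ipnorm_gt0.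
case: (ip x y) => p1 p2 /=; set S := nm y ^+ 2 => H.
rewrite -[_ * _]ger0_norm ?mulr_ge0 ?ipnorm_ge0 // -sqrtr_sqr ler_sqrt ?sqr_ge0 //.
rewrite exprMn -/S.
have e : S * (S * nm x ^+ 2 - (p1 ^+ 2 + p2 ^+ 2)) >= 0 by lra.
rewrite pmulr_rge0 // subr_ge0 in e; lra.
Qed.

Lemma ipnorm_sum_sqr x y :
  ipnorm (ip_sum ip) (x, y) ^+ 2 = nm x ^+ 2 + nm y ^+ 2.
Proof. by rewrite {1}/ipnorm /ip_sum /= !ipnn /= sqr_sqrtr ?addr_ge0 ?sqr_ge0. Qed.

Section BoundedOperator.
Context {T : V -> V}.
Hypothesis hT : bounded_op ip T.

Lemma bop0 : T 0 = 0.
Proof.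
case: hT => lin _; have /eqP := lin 1 0 0.
by rewrite scale1r addr0 scale1r addrC -subr_eq subrr eq_sym => /eqP.
Qed.

Lemma bopZ a x : T (a *: x) = a *: T x.
Proof. by case: hT => lin _; rewrite -[a *: x]addr0 lin bop0 addr0. Qed.

Lemma bop_bounded : exists2 M, 0 <= M & forall x, nm (T x) <= M * nm x.
Proof.
case: hT => _ [M hM]; exists `|M| => // x.
by apply: le_trans (hM x) _; rewrite ler_wpM2r ?ipnorm_ge0 ?ler_norm.
Qed.

Lemma bop_opnorm_bound : exists k, forall z, nm z <= 1 -> nm (T z) <= k.
Proof.
have [M M0 hM] := bop_bounded; exists M => z z1.
by apply: le_trans (hM z) _; rewrite ler_piMr.
Qed.

Lemma bop_numrad_bound : exists k, forall z, nm z = 1 -> Normc.normc (ip (T z) z) <= k.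
Proof.
have [M M0 hM] := bop_bounded; exists M => z z1.
by apply: le_trans (cauchy_schwarz _ _) _; rewrite z1 mulr1 (le_trans (hM z)) // z1 mulr1.
Qed.

Lemma bop_opnorm_ge0 : 0 <= opnorm ip T.
Proof. by have [k hk] := bop_opnorm_bound; exact: opnorm_ge0 hk. Qed.

Lemma bop_numrad_ge0 : 0 <= numrad ip T.
Proof. by have [k hk] := bop_numrad_bound; exact: numrad_ge0 hk. Qed.

Lemma ipnorm_le_opnorm z : nm (T z) <= opnorm ip T * nm z.
Proof.
have [->|z0] := eqVneq z 0; first by rewrite bop0 ipnorm0 mulr0.
have nz0 : 0 < nm z by rewrite ipnorm_gt0.
have [k hk] := bop_opnorm_bound.
have u1 : nm ((nm z)^-1%:C *: z) <= 1.
  by rewrite ipnormZ normc_real ger0_norm ?invr_ge0 ?ipnorm_ge0 // mulVf ?gt_eqF.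
have := le_opnorm hk _ u1.
rewrite bopZ ipnormZ normc_real ger0_norm ?invr_ge0 ?ipnorm_ge0 //.
by rewrite ler_pdivrMl // mulrC.
Qed.

Lemma ip_le_numrad z : Normc.normc (ip (T z) z) <= numrad ip T * nm z ^+ 2.
Proof.
have [->|z0] := eqVneq z 0.
  by rewrite bop0 ip0l ipnorm0 Normc.normc0 expr0n mulr0.
have nz0 : 0 < nm z by rewrite ipnorm_gt0.
have [k hk] := bop_numrad_bound.
have u1 : nm ((nm z)^-1%:C *: z) = 1.
  by rewrite ipnormZ normc_real ger0_norm ?invr_ge0 ?ipnorm_ge0 // mulVf ?gt_eqF.
have := le_numrad hk _ u1.
rewrite bopZ ipZl ipZr !Normc.normcM normc_conj normc_real.
rewrite ger0_norm ?invr_ge0 ?ipnorm_ge0 //.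
by rewrite mulrA -expr2 exprVn ler_pdivrMl ?exprn_gt0 // mulrC.
Qed.

End BoundedOperator.

Lemma opmat_ip_le (A B C D : V -> V) x y :
  bounded_op ip A -> bounded_op ip B -> bounded_op ip C -> bounded_op ip D ->
  Normc.normc (ip_sum ip (opmat A B C D (x, y)) (x, y)) <=
  numrad ip A * nm x ^+ 2 + opnorm ip B * (nm x * nm y) +
  opnorm ip C * (nm x * nm y) + numrad ip D * nm y ^+ 2.
Proof.
move=> hA hB hC hD; rewrite /ip_sum /opmat /= !ipDl.
have hBy := le_trans (cauchy_schwarz (B y) x)
  (ler_wpM2r (ipnorm_ge0 x) (ipnorm_le_opnorm hB y)).
have hCx := le_trans (cauchy_schwarz (C x) y)
  (ler_wpM2r (ipnorm_ge0 y) (ipnorm_le_opnorm hC x)).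
have hAx := ip_le_numrad hA x; have hDy := ip_le_numrad hD y.
apply: le_trans (le_normcD _ _) _.
have := le_normcD (ip (A x) x) (ip (B y) x); have := le_normcD (ip (C x) y) (ip (D y) y).
lra.
Qed.

End Hilbert.

Theorem theorem4p2 (R : realType) (V : lmodType R[i]) (ip : V -> V -> R[i])
  (Hip : is_hilbert ip) (A B C D : V -> V)
  (hA : bounded_op ip A) (hB : bounded_op ip B)
  (hC : bounded_op ip C) (hD : bounded_op ip D) (r : R) (hr : 1 <= r) :
  numrad (ip_sum ip) (opmat A B C D) `^ r <=
  4 `^ (r - 1) *
  numrad_mx2 (mx2 ((numrad ip A `^ r)%:C) ((opnorm ip B `^ r)%:C)
                  ((opnorm ip C `^ r)%:C) ((numrad ip D `^ r)%:C)).
Proof.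
have r0 : 0 < r by apply: lt_le_trans hr.
have a0 := bop_numrad_ge0 Hip hA; have b0 := bop_opnorm_ge0 hB.
have c0 := bop_opnorm_ge0 hC; have d0 := bop_numrad_ge0 Hip hD.
apply: numrad_powR_le => //; first by rewrite mulr_ge0 ?powR_ge0 ?numrad_mx2_ge0.
move=> [x y] z1.
have ts : ipnorm ip x ^+ 2 + ipnorm ip y ^+ 2 = 1.
  by rewrite -(ipnorm_sum_sqr Hip) z1 expr1n.
apply: le_trans (powR_quadratic_le _ _ _ _ _ _ _ hr a0 b0 c0 d0
  (ipnorm_ge0 _) (ipnorm_ge0 _) ts).
apply: (ge0_ler_powR (ltW r0)); last exact: opmat_ip_le.
  by rewrite nnegrE normc_ge0.
by rewrite nnegrE !addr_ge0 ?mulr_ge0 ?ipnorm_ge0.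
Qed.
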